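(* Let $q$ be a prime power and let $r\ge2$ and $n$ be even with $n=2m+r$, $m\ge0$. Then $$\frac{p_r(q,n)}{p_0(q,n)}=\frac{c_r(q,n)}{c_0(q,n)}=\frac{q^{r/2}}{\prod_{j=1}^{r}(q^j-1)}\cdot\prod_{j=1}^{r/2}\left(1-\frac{1}{q^{m+j}}\right).$$ In particular, for fixed even $n$ and even $r\ge2$, $p_r(q,n)/p_0(q,n)\sim q^{-r^2/2}$ as $q\to\infty$.
   Context: Let ${\mathbb F}_q$ be the finite field of order $q$. A differential on ${\mathbb F}_q^n$ is a linear map $D$ with $D^2=0$; its homology is $\ker D/\operatorname{im}D$. Let $c(q,n)$ be the number of differentials on ${\mathbb F}_q^n$, $c_r(q,n)$ the number with $r$-dimensional homology, and $p_r(q,n)=c_r(q,n)/c(q,n)$. *)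

From HB Require Import structures.
From mathcomp Require Import all_boot all_order all_algebra all_field.
Set Implicit Arguments. Unset Strict Implicit. Unset Printing Implicit Defensive.
Import Order.TTheory GRing.Theory Num.Theory.
Local Open Scope ring_scope.

(* A differential on F^n is a linear map D with D^2 = 0; linear maps of F^n
   are represented by n x n matrices (acting on row vectors, MathComp style). *)
Definition is_differential (F : fieldType) (n : nat) (D : 'M[F]_n) : bool :=
  D *m D == 0.

(* Dimension of the homology ker D / im D  =  dim ker D - dim im D
   (im D is a subspace of ker D when D^2 = 0). *)
Definition homology_dim (F : fieldType) (n : nat) (D : 'M[F]_n) : nat :=
  (\rank (kermx D) - \rank D)%N.

Definition c_all (F : finFieldType) (n : nat) : nat :=
  #|[set D : 'M[F]_n | is_differential D]|.

Definition c_hom (F : finFieldType) (n r : nat) : nat :=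
  #|[set D : 'M[F]_n | is_differential D && (homology_dim D == r)]|.

Definition p_hom (F : finFieldType) (n r : nat) : rat :=
  (c_hom F n r)%:R / (c_all F n)%:R.

From HB Require Import structures.
From mathcomp Require Import all_boot all_order all_algebra all_field.
From mathcomp Require Import ring lra zify.

(* A differential D of rank k on F_q^n has homology of dimension n - 2k, so
   c_r(q, n) counts the square-zero n x n matrices of rank k = (n - r)/2.  Such
   a D factors as D = X Y with Y a k x n matrix of full row rank and X an n x k
   matrix of full column rank; the factorization is unique up to
   (X, Y) -> (X g, g^-1 Y) with g in GL_k, and D^2 = 0 exactly when Y X = 0.
   Choosing the rows of Y and then the columns of X one at a time gives
     #{D} * |GL_k| = prod_(i<k) (q^n - q^i) * prod_(i<k) (q^(n-k) - q^i),
   i.e. #{D} = q^C(k,2) [n] / ([k] [n-2k]) with [a] = prod_(1<=j<=a) (q^j - 1).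
   The quotient c_r/c_0 of two such expressions telescopes to the stated
   product, and once the powers of q are pulled out both remaining products
   lie within r/q of 1, which gives the asymptotics. *)

Set Implicit Arguments.
Unset Strict Implicit.
Unset Printing Implicit Defensive.
Import Order.TTheory GRing.Theory Num.Theory.
Local Open Scope ring_scope.

Definition frames (q a k : nat) : nat := \prod_(i < k) (q ^ a - q ^ i).

Lemma framesS q a k : frames q a k.+1 = (frames q a k * (q ^ a - q ^ k))%N.
Proof. by rewrite /frames big_ord_recr. Qed.

Section FrameCount.
Variable F : finFieldType.

Lemma card_submx_rV n p (U : 'M[F]_(p, n)) :
  #|[set v : 'rV[F]_n | (v <= U)%MS]| = (#|F| ^ \rank U)%N.
Proof.
have -> : [set v : 'rV[F]_n | (v <= U)%MS] =
          [set w *m row_base U | w in 'rV[F]_(\rank U)].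
  apply/setP => v; rewrite inE -(eq_row_base U).
  apply/idP/imsetP => [/submxP [w ->] | [w _ ->]]; first by exists w.
  exact: submxMl.
rewrite card_imset ?card_mx ?mul1n //.
exact: row_free_inj (row_base_free U).
Qed.

Lemma row_free_col_mx_rV n k (v : 'rV[F]_n) (B : 'M[F]_(k, n)) :
  row_free B -> row_free (col_mx v B) = ~~ (v <= B)%MS.
Proof.
move=> fB; rewrite /row_free eqn_leq rank_leq_row /=.
rewrite -(leq_add2r (\rank (v :&: B)%MS)) -addsmxE mxrank_sum_cap (eqnP fB).
rewrite addnC addnS -addSn leq_add2r.
by rewrite (ltn_leqif (mxrank_leqif_sup _)) ?capmxSl // sub_capmx submx_refl.
Qed.

Lemma card_row_free_col_mx n p k (U : 'M[F]_(p, n)) (B : 'M[F]_(k, n)) :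
  row_free B -> (B <= U)%MS ->
  #|[set v : 'rV[F]_n | row_free (col_mx v B) && (v <= U)%MS]| =
  (#|F| ^ \rank U - #|F| ^ k)%N.
Proof.
move=> fB sBU; rewrite -card_submx_rV.
have -> : (#|F| ^ k)%N = #|[set v : 'rV[F]_n | (v <= B)%MS]|.
  by rewrite card_submx_rV (eqP fB).
have /setIidPr <- : [set v : 'rV[F]_n | (v <= B)%MS] \subset [set v | (v <= U)%MS].
  by apply/subsetP => v; rewrite !inE => /submx_trans->.
rewrite -cardsD; apply: eq_card => v.
by rewrite !inE row_free_col_mx_rV.
Qed.

Lemma card_row_free_submx n p (U : 'M[F]_(p, n)) k :
  #|[set A : 'M[F]_(k, n) | row_free A && (A <= U)%MS]| = frames #|F| (\rank U) k.
Proof.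
elim: k => [|k IHk].
  rewrite /frames big_ord0 (@eq_card1 _ (0 : 'M_(0, n))) // => A.
  by rewrite !inE flatmx0 /row_free mxrank.unlock sub0mx !eqxx.
rewrite framesS -IHk -[LHS]sum1_card -sum_nat_const.
rewrite (partition_big (@dsubmx F 1 k n)
  (mem [set A : 'M[F]_(k, n) | row_free A && (A <= U)%MS])) /=; last first.
  move=> A; rewrite !inE -{1 2}(vsubmxK A) (col_mx_sub (usubmx A)).
  case/andP=> fA /andP[_ ->]; rewrite andbT /row_free eqn_leq rank_leq_row /=.
  rewrite -(leq_add2l (\rank (usubmx A))) -mxrank_sum_cap.
  move: fA; rewrite /row_free addsmxE => /eqP->.
  by rewrite (leq_trans (leq_add (rank_leq_row _) (leqnn k))) // add1n leq_addr.
apply: eq_bigr => B; rewrite inE => /andP[fB sBU].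
rewrite (reindex (col_mx^~ B)) /=; last first.
  exists usubmx => [v _ | A]; first by rewrite col_mxKu.
  by rewrite inE => /andP[_ /eqP <-]; rewrite vsubmxK.
rewrite -(card_row_free_col_mx fB sBU) -sum1_card; apply: eq_bigl => v.
rewrite !inE col_mxKd eqxx andbT.
by rewrite (col_mx_sub v) sBU andbT.
Qed.

Lemma card_row_free n k :
  #|[set A : 'M[F]_(k, n) | row_free A]| = frames #|F| n k.
Proof.
have := card_row_free_submx (1%:M : 'M[F]_n) k; rewrite mxrank1 => <-.
by apply: eq_card => A; rewrite !inE submx1 andbT.
Qed.

Lemma card_unitmx k : #|[set g : 'M[F]_k | g \in unitmx]| = frames #|F| k k.
Proof. by rewrite -card_row_free; apply: eq_card => g; rewrite !inE row_free_unit. Qed.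

Lemma card_annihilated_full_rank n k (Y : 'M[F]_(k, n)) : row_free Y ->
  #|[set X : 'M[F]_(n, k) | (\rank X == k) && (Y *m X == 0)]| =
  frames #|F| (n - k) k.
Proof.
move=> fY; have rkY : \rank (kermx Y^T) = (n - k)%N.
  by rewrite mxrank_ker mxrank_tr (eqP fY).
rewrite -rkY -card_row_free_submx.
rewrite -(card_imset _ (@trmx_inj _ _ _)); apply: eq_card => A.
rewrite inE; apply/imsetP/idP => [[X] | /andP[fA sA]].
  rewrite inE => /andP[rX YX] ->.
  by rewrite /row_free mxrank_tr rX sub_kermx -trmx_mul trmx_eq0.
exists A^T; last by rewrite trmxK.
by rewrite inE mxrank_tr (eqP fA) eqxx -trmx_eq0 trmx_mul trmxK -sub_kermx.
Qed.

End FrameCount.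

Section RankFactorization.
Variable F : fieldType.

Lemma rank_factorization m n k (D : 'M[F]_(m, n)) : \rank D = k ->
  exists Y : 'M[F]_(k, n), exists X : 'M[F]_(m, k),
    [/\ row_free Y, \rank X = k & X *m Y = D].
Proof.
move=> rD; set P1 : 'M[F]_(k, n) := pid_mx k; set P2 : 'M[F]_(m, k) := pid_mx k.
exists (P1 *m row_ebase D), (col_ebase D *m P2).
have XY : col_ebase D *m P2 *m (P1 *m row_ebase D) = D.
  by rewrite mulmxA -(mulmxA (col_ebase D)) mul_pid_mx !minnn -rD mulmx_ebase.
split=> //.
  rewrite /row_free eqn_leq rank_leq_row /= -{1}rD -{1}XY; exact: mxrankM_maxr.
apply/eqP; rewrite eqn_leq rank_leq_col /= -{1}rD -{1}XY; exact: mxrankM_maxl.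
Qed.

Lemma rank_factorization_unique m n k (X0 X : 'M[F]_(m, k)) (Y0 Y : 'M[F]_(k, n)) :
  \rank X0 = k -> row_free Y -> \rank X = k ->
  X *m Y = X0 *m Y0 ->
  exists2 g, g \in unitmx & X = X0 *m g /\ Y = invmx g *m Y0.
Proof.
move=> rX0 fY rX XY.
have /row_fullP[B0 BX0] : row_full X0 by rewrite /row_full rX0.
have [C YC] := row_freeP fY.
have XE : X = X0 *m (B0 *m X).
  have XC : X = X0 *m Y0 *m C by rewrite -XY -mulmxA YC mulmx1.
  by rewrite {2}XC !mulmxA -(mulmxA X0 B0) BX0 mulmx1 -XC.
have gY : B0 *m X *m Y = Y0 by rewrite -mulmxA XY mulmxA BX0 mul1mx.
have gu : B0 *m X \in unitmx.
  rewrite -row_free_unit /row_free eqn_leq rank_leq_row /= -{1}rX {1}XE.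
  exact: mxrankM_maxr.
exists (B0 *m X) => //; split=> //.
by rewrite -gY mulmxA mulVmx ?mul1mx.
Qed.

End RankFactorization.

Lemma mulmx_sqzeroE (F : fieldType) n k (X : 'M[F]_(n, k)) (Y : 'M[F]_(k, n)) :
  row_free Y -> \rank X = k -> (X *m Y *m (X *m Y) == 0) = (Y *m X == 0).
Proof.
move=> fY rX; have /row_fullP[B BX] : row_full X by rewrite /row_full rX.
have [C YC] := row_freeP fY.
apply/eqP/eqP => [XYXY | YX0]; last by rewrite -mulmxA (mulmxA Y) YX0 mul0mx mulmx0.
have := congr1 (fun M => B *m M *m C) XYXY.
by rewrite !mulmxA BX mul1mx -!mulmxA YC mulmx1 mul0mx mulmx0.
Qed.

Section SquareZeroCount.
Variable F : finFieldType.

Lemma card_rank_factorizations m n k (D : 'M[F]_(m, n)) : \rank D = k ->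
  #|[set YX : 'M[F]_(k, n) * 'M[F]_(m, k) |
     [&& row_free YX.1, \rank YX.2 == k & YX.2 *m YX.1 == D]]| =
  frames #|F| k k.
Proof.
move=> rD; have [Y0 [X0 [fY0 rX0 XY0]]] := rank_factorization rD.
have /row_fullP[B0 BX0] : row_full X0 by rewrite /row_full rX0.
pose act g := (invmx g *m Y0, X0 *m g).
rewrite -card_unitmx -(card_imset _ (_ : injective act)).
  apply: eq_card => -[Y X]; rewrite !inE /=; apply/idP/imsetP.
    case/and3P=> fY /eqP rX /eqP XY.
    have [g gu [-> ->]] := rank_factorization_unique rX0 fY rX (etrans XY (esym XY0)).
    by exists g; rewrite ?inE.
  case=> g; rewrite inE => gu [-> ->].
  have fgi : row_full (invmx g) by rewrite row_full_unit unitmx_inv.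
  rewrite /row_free (eqmxMfull _ fgi) (eqP fY0) mxrankMfree ?row_free_unit //.
  by rewrite rX0 mulmxA mulmxK // XY0 !eqxx.
move=> g1 g2 [_] /(congr1 (mulmx B0)).
by rewrite !mulmxA BX0 !mul1mx.
Qed.

Definition sqzero_rank n k := [set D : 'M[F]_n | (D *m D == 0) && (\rank D == k)].

Lemma card_sqzero_rank n k :
  (#|sqzero_rank n k| * frames #|F| k k =
   frames #|F| n k * frames #|F| (n - k) k)%N.
Proof.
pose P := [set YX : 'M[F]_(k, n) * 'M[F]_(n, k) |
            [&& row_free YX.1, \rank YX.2 == k & YX.1 *m YX.2 == 0]].
have -> : (frames #|F| n k * frames #|F| (n - k) k = #|P|)%N.
  rewrite -card_row_free -sum_nat_const -sum1_card.
  rewrite (eq_bigr (fun Y : 'M[F]_(k, n) =>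
             \sum_(X : 'M[F]_(n, k) | (\rank X == k) && (Y *m X == 0%R)) 1)%N).
    by rewrite pair_big_dep; apply: eq_bigl => -[Y X]; rewrite !inE.
  by move=> Y; rewrite inE => fY; rewrite sum1dep_card card_annihilated_full_rank.
rewrite -sum_nat_const -[RHS]sum1_card.
rewrite (partition_big (fun YX : 'M[F]_(k, n) * 'M[F]_(n, k) => YX.2 *m YX.1)
          (mem (sqzero_rank n k))) /=; last first.
  case=> Y X; rewrite !inE /= => /and3P[fY /eqP rX YX].
  by rewrite mulmx_sqzeroE // YX mxrankMfree // rX eqxx.
apply: eq_bigr => D; rewrite inE => /andP[DD /eqP rD].
rewrite -(card_rank_factorizations rD) -sum1_card; apply: eq_bigl => -[Y X] /=.
rewrite !inE /=; case: (boolP (row_free Y)) => //= fY.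
case: (eqVneq (\rank X) k) => //= rX; case: (eqVneq (X *m Y) D) => [XY | _].
  by rewrite -mulmx_sqzeroE // XY DD.
by rewrite andbF.
Qed.

End SquareZeroCount.

(* (q - 1)^a times the q-factorial [a]_q! *)
Definition qfact (q a : nat) : nat := \prod_(1 <= j < a.+1) (q ^ j - 1).

Lemma qfact0 q : qfact q 0 = 1%N.
Proof. by rewrite /qfact big_geq. Qed.

Lemma qfactS q a : qfact q a.+1 = (qfact q a * (q ^ a.+1 - 1))%N.
Proof. by rewrite /qfact big_nat_recr. Qed.

Lemma qfact_gt0 q a : (1 < q)%N -> (0 < qfact q a)%N.
Proof.
move=> q1; elim: a => [|a IH]; first by rewrite qfact0.
by rewrite qfactS muln_gt0 IH subn_gt0 -{1}(expn0 q) ltn_exp2l.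
Qed.

Lemma frames_qfact q a k : (k <= a)%N ->
  (frames q a k * qfact q (a - k) = q ^ 'C(k, 2) * qfact q a)%N.
Proof.
elim: k => [|k IH] ka; first by rewrite /frames big_ord0 subn0 bin0n expn0 !mul1n.
have kla : (k <= a)%N by apply: ltnW.
have qfE : qfact q (a - k) = (qfact q (a - k.+1) * (q ^ (a - k) - 1))%N.
  have -> : (a - k = (a - k.+1).+1)%N by lia.
  exact: qfactS.
have fE : (q ^ a - q ^ k = q ^ k * (q ^ (a - k) - 1))%N.
  by rewrite mulnBr muln1 -expnD subnKC.
rewrite framesS binS bin1 expnD fE.
transitivity (q ^ k * (frames q a k * qfact q (a - k)))%N; first by rewrite qfE; ring.
by rewrite IH //; ring.
Qed.

Lemma card_sqzero_rank_qfact (F : finFieldType) n k : (2 * k <= n)%N ->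
  (#|sqzero_rank F n k| * qfact #|F| k * qfact #|F| (n - 2 * k) =
   #|F| ^ 'C(k, 2) * qfact #|F| n)%N.
Proof.
move=> kn; set q := #|F|.
have q1 : (1 < q)%N by exact: card_finNzRing_gt1.
have kn' : (k <= n - k)%N by lia.
have fkk := frames_qfact q (leqnn k); rewrite subnn qfact0 muln1 in fkk.
have fnk := frames_qfact q (leq_trans kn' (leq_subr k n)).
have fnkk := frames_qfact q kn'; rewrite -subnDA addnn -mul2n in fnkk.
have pos : (0 < q ^ 'C(k, 2) * qfact q (n - k))%N.
  by rewrite muln_gt0 expn_gt0 ltnW // qfact_gt0.
apply/eqP; rewrite -(eqn_pmul2r pos); apply/eqP.
transitivity (#|sqzero_rank F n k| * frames q k k *
              qfact q (n - 2 * k) * qfact q (n - k))%N.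
  by rewrite fkk; ring.
rewrite card_sqzero_rank.
transitivity ((frames q n k * qfact q (n - k)) *
              (frames q (n - k) k * qfact q (n - 2 * k)))%N.
  by ring.
by rewrite fnk fnkk; ring.
Qed.

Lemma differential_rank_leq (F : fieldType) n (D : 'M[F]_n) :
  is_differential D -> (2 * \rank D <= n)%N.
Proof.
move=> DD; have /mxrankS : (D <= kermx D)%MS by rewrite sub_kermx.
by rewrite mxrank_ker; have := rank_leq_row D; lia.
Qed.

Lemma c_hom_sqzero_rank (F : finFieldType) n k r : (2 * k + r = n)%N ->
  c_hom F n r = #|sqzero_rank F n k|.
Proof.
move=> nE; apply: eq_card => D; rewrite !inE /homology_dim mxrank_ker.
rewrite -/(is_differential D).
case: (boolP (is_differential D)) => //= /differential_rank_leq.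
by move: (\rank D) => d dn; apply/eqP/eqP; lia.
Qed.

Lemma c_all_gt0 (F : finFieldType) n : (0 < c_all F n)%N.
Proof.
by rewrite card_gt0; apply/set0Pn; exists 0; rewrite inE /is_differential mulmx0.
Qed.

Lemma p_hom_ratio (F : finFieldType) n r :
  p_hom F n r / p_hom F n 0 = (c_hom F n r)%:R / (c_hom F n 0)%:R.
Proof.
by rewrite /p_hom invf_div mulrA divfK // pnatr_eq0 -lt0n c_all_gt0.
Qed.

Lemma natr_qfact (R : pzRingType) q a : (0 < q)%N ->
  (qfact q a)%:R = \prod_(1 <= j < a.+1) (q%:R ^+ j - 1) :> R.
Proof.
move=> q0; rewrite /qfact natr_prod; apply: eq_bigr => j _.
by rewrite natrB ?natrX // expn_gt0 q0.
Qed.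

Lemma prod_exprB1 (R : fieldType) (x : R) K : x != 0 ->
  \prod_(1 <= j < K.+1) (x ^+ j - 1) =
  x ^+ 'C(K.+1, 2) * \prod_(1 <= j < K.+1) (1 - x^-1 ^+ j).
Proof.
move=> x0; have -> : 'C(K.+1, 2) = (\sum_(1 <= j < K.+1) j)%N.
  by rewrite -bin2_sum big_ltn.
rewrite -prodrXr -big_split /=.
by apply: eq_bigr => j _; rewrite mulrBr mulr1 exprVn mulfV // expf_neq0.
Qed.

Lemma prod_exprB1_addn (R : fieldType) (x : R) m s : x != 0 ->
  x ^+ 'C(m, 2) * \prod_(1 <= j < (m + s).+1) (x ^+ j - 1) =
  x ^+ 'C(m + s, 2) * \prod_(1 <= j < m.+1) (x ^+ j - 1) *
  (x ^+ s * \prod_(1 <= j < s.+1) (1 - (x ^+ (m + j))^-1)).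
Proof.
move=> x0; rewrite !prod_exprB1 // (@big_cat_nat _ _ _ m.+1) ?ltnS ?leq_addr //=.
have -> : \prod_(m.+1 <= j < (m + s).+1) (1 - x^-1 ^+ j) =
          \prod_(1 <= j < s.+1) (1 - (x ^+ (m + j))^-1).
  rewrite -[m.+1]add1n big_addn -addnS addKn.
  by apply: eq_bigr => j _; rewrite exprVn addnC.
by rewrite !binS !bin1 !exprD; ring.
Qed.

Lemma prod_1_subr_expr_bounds (R : realFieldType) (x : R) a b (e : nat -> nat) :
  0 <= x <= 1 -> (forall j, (a <= j)%N -> (0 < e j)%N) ->
  1 - (b - a)%:R * x <= \prod_(a <= j < b) (1 - x ^+ e j) <= 1.
Proof.
move=> /andP[x0 x1] e_gt0; elim: b => [|b IH].
  by rewrite big_geq // sub0n mul0r subr0 lexx.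
have [ab | ba] := leqP a b; last first.
  by rewrite big_geq // (_ : b.+1 - a = 0)%N ?mul0r ?subr0 ?lexx //; lia.
rewrite big_nat_recr //= subSn // mulrSr.
have xe0 : 0 <= x ^+ e b by rewrite exprn_ge0.
have xex : x ^+ e b <= x by rewrite ler_iXnr // e_gt0.
have P0 : 0 <= \prod_(a <= j < b) (1 - x ^+ e j).
  by apply: prodr_ge0 => j _; rewrite subr_ge0 exprn_ile1.
move: IH P0; set P := \prod_(a <= j < b) _ => /andP[lP uP] P0.
apply/andP; split; nra.
Qed.

Lemma normr_divB1_lt (R : realFieldType) (A B d eps : R) :
  1 - d <= A <= 1 -> 1 - d <= B <= 1 -> 2 * d <= 1 -> 2 * d < eps ->
  `|A / B - 1| < eps.
Proof.
move=> /andP[lA uA] /andP[lB uB] d1 deps.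
have B0 : 0 < B by lra.
have -> : A / B - 1 = (A - B) / B by field; rewrite gt_eqF.
rewrite normrM normfV (gtr0_norm B0) ltr_pdivrMr // ltr_norml.
by apply/andP; split; nra.
Qed.

Lemma c_hom_qfact (F : finFieldType) n k r : (2 * k + r = n)%N ->
  (c_hom F n r)%:R = (#|F|%:R : rat) ^+ 'C(k, 2) * (qfact #|F| n)%:R /
                     ((qfact #|F| k)%:R * (qfact #|F| r)%:R).
Proof.
move=> nE; have q1 : (1 < #|F|)%N := card_finNzRing_gt1 F.
have := card_sqzero_rank_qfact F (leq_addr r (2 * k)).
rewrite addKn nE -(c_hom_sqzero_rank F nE) => /(congr1 (GRing.natmul (1 : rat))).
rewrite !natrM natrX => <-; field.
by rewrite !pnatr_eq0 -!lt0n !qfact_gt0.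
Qed.

Lemma c_hom_ratio (F : finFieldType) m r : ~~ odd r ->
  (c_hom F (2 * m + r) r)%:R / (c_hom F (2 * m + r) 0)%:R =
  (#|F|%:R : rat) ^+ r./2 / \prod_(1 <= j < r.+1) (#|F|%:R ^+ j - 1) *
  \prod_(1 <= j < r./2.+1) (1 - (#|F|%:R ^+ (m + j))^-1).
Proof.
move=> er; have q1 : (1 < #|F|)%N := card_finNzRing_gt1 F.
have q0 : #|F|%:R != 0 :> rat by rewrite pnatr_eq0 -lt0n ltnW.
have G0 a : (qfact #|F| a)%:R != 0 :> rat by rewrite pnatr_eq0 -lt0n qfact_gt0.
have nE : (2 * (m + r./2) + 0 = 2 * m + r)%N by have := even_halfK er; lia.
have PE a : \prod_(1 <= j < a.+1) ((#|F|%:R : rat) ^+ j - 1) = (qfact #|F| a)%:R.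
  by rewrite natr_qfact // ltnW.
have := prod_exprB1_addn m r./2 q0.
rewrite (PE (m + r./2)%N) (PE m).
set T := \prod_(1 <= j < r./2.+1) _ => hT.
have TE : T = #|F|%:R ^+ 'C(m, 2) * (qfact #|F| (m + r./2))%:R /
              (#|F|%:R ^+ 'C(m + r./2, 2) * (qfact #|F| m)%:R * #|F|%:R ^+ r./2).
  by rewrite hT; field; rewrite G0 !expf_neq0.
rewrite (c_hom_qfact F (erefl (2 * m + r)%N)) (c_hom_qfact F nE) qfact0 mulr1.
rewrite PE TE; field.
by rewrite !G0 !expf_neq0.
Qed.

Lemma eventually_small_ratio (R : archiRealFieldType) (c eps : R) : 0 <= c -> 0 < eps ->
  exists Q : nat, forall q : nat, (Q <= q)%N ->
    2 * (c / q%:R) <= 1 /\ 2 * (c / q%:R) < eps.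
Proof.
move=> c0 eps0; pose b (y : R) := Num.Def.archi_bound y.
exists (b (2 * c / eps)%R + b (2 * c)%R)%N => q qQ.
have lt_q y : 0 <= y -> (b y <= q)%N -> y < q%:R.
  by move=> y0 bq; apply: lt_le_trans (archi_boundP y0) _; rewrite ler_nat.
have c2 : 0 <= 2 * c by lra.
have ltcq : 2 * c < q%:R := lt_q _ c2 (leq_trans (leq_addl _ _) qQ).
have q0 : 0 < q%:R :> R by apply: le_lt_trans ltcq.
have c_eps : 0 <= 2 * c / eps := divr_ge0 c2 (ltW eps0).
split; first by rewrite mulrA ler_pdivrMr // mul1r ltW.
rewrite mulrA ltr_pdivrMr // [eps * _]mulrC -ltr_pdivrMr //.
exact: lt_q c_eps (leq_trans (leq_addr _ _) qQ).
Qed.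

Lemma p_hom_ratio_asymptotic m r (eps : rat) : ~~ odd r -> 0 < eps ->
  exists Q : nat, forall F : finFieldType, (Q <= #|F|)%N ->
    `|p_hom F (2 * m + r) r / p_hom F (2 * m + r) 0 * #|F|%:R ^+ (r * r)./2 - 1|
      < eps.
Proof.
move=> er eps0; have [Q smallQ] := eventually_small_ratio (ler0n rat r) eps0.
exists Q => F /smallQ[d1 deps].
have q1 : (1 < #|F|)%N := card_finNzRing_gt1 F.
have q0 : 0 < #|F|%:R :> rat by rewrite ltr0n ltnW.
pose x : rat := #|F|%:R^-1.
have x01 : 0 <= x <= 1 by rewrite invr_ge0 ltW // invf_le1 // ler1n ltnW.
rewrite p_hom_ratio c_hom_ratio // prod_exprB1 ?gt_eqF // -/x.
set A := \prod_(1 <= j < r./2.+1) _; set B := \prod_(1 <= j < r.+1) _.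
have hA : 1 - r%:R / #|F|%:R <= A <= 1.
  have -> : A = \prod_(1 <= j < r./2.+1) (1 - x ^+ (m + j)).
    by apply: eq_bigr => j _; rewrite exprVn.
  have /andP[lA ->] := prod_1_subr_expr_bounds (e := fun j => (m + j)%N) r./2.+1 x01
    (fun j j1 => leq_trans j1 (leq_addl m j)).
  rewrite andbT (le_trans _ lA) // subn1 /= lerD2l lerN2 ler_wpM2r ?ler_nat //.
    by case/andP: x01.
  lia.
have hB : 1 - r%:R / #|F|%:R <= B <= 1.
  by have := prod_1_subr_expr_bounds (e := id) r.+1 x01 (fun j j1 => j1); rewrite subn1.
have -> : #|F|%:R ^+ r./2 / (#|F|%:R ^+ 'C(r.+1, 2) * B) * A *
          #|F|%:R ^+ (r * r)./2 = A / B.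
  rewrite (_ : 'C(r.+1, 2) = r./2 + (r * r)./2)%N ?exprD; last by rewrite bin2; lia.
  by field; rewrite ?expf_neq0 ?gt_eqF //; lra.
exact: normr_divB1_lt hA hB d1 deps.
Qed.

Theorem mainTheorem6 :
  (forall (F : finFieldType) (r m : nat),
     ~~ odd r -> (2 <= r)%N ->
     let n := (2 * m + r)%N in
     let q : rat := (#|F|)%:R in
     p_hom F n r / p_hom F n 0 = (c_hom F n r)%:R / (c_hom F n 0)%:R /\
     (c_hom F n r)%:R / (c_hom F n 0)%:R =
       q ^+ (r./2) / (\prod_(1 <= j < r.+1) (q ^+ j - 1))
       * \prod_(1 <= j < (r./2).+1) (1 - (q ^+ (m + j))^-1))
  /\
  (forall (r m : nat), ~~ odd r -> (2 <= r)%N ->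
     let n := (2 * m + r)%N in
     forall eps : rat, 0 < eps ->
     exists Q : nat, forall F : finFieldType, (Q <= #|F|)%N ->
       `| p_hom F n r / p_hom F n 0 * (#|F|)%:R ^+ ((r * r)./2) - 1 | < eps).
Proof.
(* Both parts also hold for r = 0. *)
split=> [F r m er _ n q | r m er _ n eps eps0].
  by split; [exact: p_hom_ratio | exact: c_hom_ratio].
exact: p_hom_ratio_asymptotic.
Qed.
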